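(* Let $m\geq 2$ be an integer, $q$ an odd prime power and $n=\frac{q^m+1}{2}$. Then the largest odd coset leader modulo $q^m+1$ is $\delta_1=n$ if $q^m\equiv 1\pmod 4$, and $\delta_1=\frac{(q-1)n}{q+1}$ if $q^m\equiv 3\pmod 4$. Moreover, $|C_{\delta_1}^{(q,q^m+1)}|=1$ if $q^m\equiv 1\pmod 4$ and $|C_{\delta_1}^{(q,q^m+1)}|=2$ if $q^m\equiv 3\pmod 4$.
   Context: $C_i^{(q,N)}=\{i,iq,iq^2,\ldots\}\bmod N$ denotes the $q$-cyclotomic coset of $i$ modulo $N$; its smallest element is its coset leader. An odd coset leader modulo $N$ is a coset leader that is an odd integer. *)

From mathcomp Require Import all_boot.
From mathcomp Require Import boolp.
Set Implicit Arguments. Unset Strict Implicit. Unset Printing Implicit Defensive.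

Definition cyc_coset (q N i : nat) : {set 'I_N} :=
  [set x : 'I_N | `[< exists j : nat, nat_of_ord x = (i * q ^ j) %% N >]].

Definition coset_leader (q N i : nat) : Prop :=
  i < N /\ forall j : nat, i <= (i * q ^ j) %% N.

Definition odd_coset_leader (q N i : nat) : Prop :=
  coset_leader q N i /\ odd i.

Definition largest_odd_coset_leader (q N d : nat) : Prop :=
  odd_coset_leader q N d /\ forall i, odd_coset_leader q N i -> i <= d.

Definition prime_power (q : nat) : Prop :=
  exists p k : nat, prime p /\ 0 < k /\ q = p ^ k.

(* Since q^m = -1 modulo N = q^m + 1, the residues i q^j and i q^(j+m) of a
   coset sum to N, so a coset leader i satisfies i <= N - i, i.e. i <= N/2.
   If q^m = 1 (mod 4), then n = N/2 is odd and n q = n (mod N), so n is a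
   coset leader with a singleton coset.  If q^m = 3 (mod 4), then q = 3
   (mod 4), m is odd and N = (q+1) S with S odd; n is now even, and
   d = (q-1)/2 S satisfies d q = -d (mod N), so its coset is {d, N - d}.
   An odd leader i with d < i < n is impossible: some power q^k scales
   t = n - i < S into [S, q S), and then i q^k = n - t q^k (mod N) lands
   in [0, d] or in (N - d, N), below i or above N - i. *)
From mathcomp Require Import all_boot.
From mathcomp Require Import boolp.
From mathcomp Require Import zify ring.

Set Implicit Arguments.
Unset Strict Implicit.
Unset Printing Implicit Defensive.

Lemma mulnX_orbit2 (q N x y : nat) :
  x * q = y %[mod N] -> y * q = x %[mod N] ->
  forall j, x * q ^ j = x %[mod N] \/ x * q ^ j = y %[mod N].
Proof.
move=> hxy hyx; elim=> [|j IH]; first by left; rewrite muln1.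
rewrite expnSr mulnA -modnMml.
by case: IH => ->; rewrite modnMml; [right | left].
Qed.

Section Orbit2.
Variables (q N x y : nat) (ltxN : x < N) (ltyN : y < N).
Hypotheses (xq : x * q = y %[mod N]) (yq : y * q = x %[mod N]).

Lemma cyc_coset_orbit2 : cyc_coset q N x = [set Ordinal ltxN; Ordinal ltyN].
Proof.
apply/setP => z; rewrite inE !in_set2 -!val_eqE /=; apply/asboolP/idP.
  move=> [j ->]; case: (mulnX_orbit2 xq yq j) => ->;
  by rewrite modn_small ?eqxx ?orbT.
case/orP => /eqP ->; [exists 0 | exists 1].
  by rewrite muln1 modn_small.
by rewrite expn1 xq modn_small.
Qed.

Lemma card_cyc_coset_orbit2 : #|cyc_coset q N x| = (x != y).+1.
Proof. by rewrite cyc_coset_orbit2 cards2. Qed.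

Lemma coset_leader_orbit2 : x <= y -> coset_leader q N x.
Proof.
move=> lexy; split=> // j.
by case: (mulnX_orbit2 xq yq j) => ->; rewrite !modn_small.
Qed.

End Orbit2.

Lemma mul_odd_mod_double (n q : nat) : odd q -> n * q = n %[mod n.*2].
Proof.
move=> oq; rewrite -[q in LHS]odd_double_half oq add1n.
by rewrite (_ : n * _ = q./2 * n.*2 + n) ?modnMDl // -!muln2; ring.
Qed.

Lemma exists_expn_scale_between (q S t : nat) : 1 < q -> 0 < t < S ->
  exists k, S <= t * q ^ k < q * S.
Proof.
move=> q_gt1 /andP[t_gt0 ltTS].
have exS : exists k, S <= t * q ^ k.
  by exists S; apply: leq_trans (ltnW (ltn_expl S q_gt1)) _; rewrite leq_pmull.
case: (ex_minnP exS) => [[|k]]; first by rewrite muln1 leqNgt ltTS.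
move=> leSk minK; exists k.+1.
rewrite leSk expnSr mulnA mulnC ltn_pmul2l ?(ltnW q_gt1) // ltnNge.
by apply/negP => /minK; rewrite ltnn.
Qed.

Lemma odd_expn_mod4 (q m : nat) : odd q ->
  q ^ m %% 4 = if odd m then q %% 4 else 1.
Proof.
move=> oq; elim: m => [|m IH] //=; rewrite expnS -modnMm IH.
have : q %% 4 = 1 \/ q %% 4 = 3 by lia.
by case: (odd m) => /=; case=> ->.
Qed.

Lemma odd_expn_add1_factor (q m : nat) : odd m ->
  exists T, q ^ m + 1 = (q + 1) * (1 + (q - 1) * T).
Proof.
move=> om; rewrite -[m]odd_double_half om add1n.
elim: m./2 => [|l [T IH]]; first by exists 0; rewrite muln0 addn0 expn1 muln1.
exists (q + q ^ 2 * T).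
move: IH; rewrite doubleS !expnS; set P := q ^ _ => IH; nia.
Qed.

Section CosetsModExpnAdd1.
Variables q m : nat.
Local Notation N := (q ^ m + 1).

Lemma mulnXm_mod (x : nat) : 0 < x < N -> x * q ^ m %% N = N - x.
Proof.
move=> /andP[x_gt0 ltxN].
by rewrite (_ : x * q ^ m = (x - 1) * N + (N - x)) ?modnMDl ?modn_small; nia.
Qed.

Lemma coset_leader_mod_add_le (i j : nat) :
  coset_leader q N i -> (i * q ^ j) %% N + i <= N.
Proof.
move=> [ltiN leader]; have [->|i_gt0] := posnP i; first by rewrite mul0n mod0n.
set r := _ %% N; have lei_r : i <= r := leader j.
have ltrN : r < N by rewrite /r ltn_mod addn1.
have := leader (j + m); rewrite expnD mulnA -modnMml -/r mulnXm_mod; lia.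
Qed.

Lemma coset_leader_notin_gap (n S i : nat) :
  1 < q -> odd q -> N = n.*2 -> N = (q + 1) * S ->
  coset_leader q N i -> n - S < i < n -> False.
Proof.
move=> q_gt1 oq Nn NS leader /andP[gt_i lt_i].
have [k /andP[leSt ltTqS]] :=
  @exists_expn_scale_between q S (n - i) q_gt1 ltac:(apply/andP; lia).
set t := (n - i) * q ^ k in leSt ltTqS.
have nq : n * q = n %[mod N] by rewrite Nn mul_odd_mod_double.
have nqk : n * q ^ k = n %[mod N] by case: (mulnX_orbit2 nq nq k).
set r := (i * q ^ k) %% N.
have lei_r : i <= r := leader.2 k.
have ler_N := coset_leader_mod_add_le k leader.
have : (r + t) %% N = n.
  by rewrite modnDml -mulnDl subnKC ?nqk ?modn_small; lia.
case: (ltnP (r + t) N) => [ltN | leN]; first by rewrite modn_small; lia.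
by rewrite -(subnK leN) modnDr modn_small; lia.
Qed.

Lemma coset_leader_le_half (i : nat) : coset_leader q N i -> i.*2 <= N.
Proof.
move=> leader; have := coset_leader_mod_add_le 0 leader.
by rewrite muln1 modn_small -?addnn //; exact: leader.1.
Qed.

Lemma half_largest_odd_coset_leader (n : nat) : odd q -> odd n -> N = n.*2 ->
  largest_odd_coset_leader q N n /\ #|cyc_coset q N n| = 1.
Proof.
move=> oq on Nn.
have ltnN : n < N by rewrite Nn; have := odd_gt0 on; lia.
have nq : n * q = n %[mod N] by rewrite Nn mul_odd_mod_double.
split; last by rewrite (card_cyc_coset_orbit2 ltnN ltnN nq nq) eqxx.
split; first by split=> //; exact: (coset_leader_orbit2 ltnN ltnN nq nq (leqnn n)).
move=> i [/coset_leader_le_half]; lia.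
Qed.

Lemma three_mod4_largest_odd_coset_leader (a S : nat) :
  q = 4 * a + 3 -> N = (4 * a + 4) * S -> odd S ->
  let d := (2 * a + 1) * S in
  largest_odd_coset_leader q N d /\ #|cyc_coset q N d| = 2.
Proof.
move=> qa NS oS d; have S_gt0 := odd_gt0 oS.
set e := (2 * a + 3) * S; set n := (2 * a + 2) * S.
have ltdN : d < N by rewrite NS ltn_pmul2r //; lia.
have lteN : e < N by rewrite NS ltn_pmul2r //; lia.
have dqe : d * q = e %[mod N].
  by rewrite (_ : d * q = 2 * a * N + e) ?modnMDl // NS qa /d /e; ring.
have eqd : e * q = d %[mod N].
  by rewrite (_ : e * q = (2 * a + 2) * N + d) ?modnMDl // NS qa /d /e; ring.
split; last first.
  rewrite (card_cyc_coset_orbit2 ltdN lteN dqe eqd) (_ : d != e) //.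
  by rewrite /d /e eqn_pmul2r //; lia.
have odd_d : odd d by rewrite /d oddM oS andbT oddD oddM.
split.
  split=> //; apply: (coset_leader_orbit2 ltdN lteN dqe eqd).
  by rewrite leq_pmul2r //; lia.
move=> i [leader oi]; rewrite leqNgt; apply/negP => ltdi.
have Nn : N = n.*2 by rewrite NS /n -!muln2; ring.
have n_dS : n = d + S by rewrite /n /d; ring.
have lein : i <= n by rewrite -leq_double -Nn coset_leader_le_half.
have neq_in : i != n by apply: contraTneq oi => ->; rewrite oddM oddD oddM.
apply: (coset_leader_notin_gap _ _ Nn (_ : N = (q + 1) * S) leader).
- by rewrite qa; lia.
- by rewrite qa oddD oddM.
- by rewrite NS qa; ring.
- by apply/andP; split; lia.
Qed.

End CosetsModExpnAdd1.

Theorem lemma26 (m q : nat) :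
  2 <= m -> prime_power q -> odd q ->
  let N := q ^ m + 1 in
  let n := (q ^ m + 1) %/ 2 in
  (q ^ m %% 4 = 1 ->
     largest_odd_coset_leader q N n /\ #|cyc_coset q N n| = 1) /\
  (q ^ m %% 4 = 3 ->
     let d1 := (q - 1) * n %/ (q + 1) in
     largest_odd_coset_leader q N d1 /\ #|cyc_coset q N d1| = 2).
Proof.
move=> _ _ oq N n; split=> [qm1 | qm3 d1].
  by apply: half_largest_odd_coset_leader; rewrite // /n; lia.
have [q3 om] : q %% 4 = 3 /\ odd m.
  by move: qm3; rewrite odd_expn_mod4 //; case: (odd m).
have [T NT] := odd_expn_add1_factor q om.
set a := q %/ 4; set S := 1 + (q - 1) * T in NT.
have qa : q = 4 * a + 3 by rewrite /a; lia.
have q1 : q - 1 = 2 * (2 * a + 1) by lia.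
have oS : odd S by rewrite /S q1 oddD -mulnA oddM.
have NS : N = (4 * a + 4) * S by rewrite /N NT qa -addnA.
have n_eq : n = (2 * a + 2) * S.
  by rewrite /n -/N NS (_ : (4 * a + 4) * S = (2 * a + 2) * S * 2) ?mulnK //; ring.
have -> : d1 = (2 * a + 1) * S.
  rewrite /d1 n_eq q1 qa.
  rewrite (_ : 2 * _ * _ = (2 * a + 1) * S * (4 * a + 3 + 1)); last by ring.
  by rewrite mulnK // addn1.
exact: three_mod4_largest_odd_coset_leader qa NS oS.
Qed.
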